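(* Let $\alpha>2$, $\theta_0\ge 0$, $r_0>0$, and $\overline{R}_{\theta_0}=\log_2(1+\theta_0)$. For each integer $N\ge 1$ let $p_N$ be the activity probability of either TDMA or FDMA/TDMA, $$p_N^{\mathrm{TDMA}}=\tfrac1N\Pr\{K>0\},\qquad p_N^{\mathrm{FDMA/TDMA}}=\tfrac1N\textstyle\sum_{k>0}\Pr\{K=k\}\min\{k,N\},$$ with $K$ distributed as $\Pr\{K=k\}=\frac{3.5^{3.5}\Gamma(k+3.5)\tau^{3.5}}{\Gamma(3.5)k!(1+3.5\tau)^{k+3.5}}$, $k\ge0$, for some $\tau>0$. Let $F_N(\theta)=1-\frac{1}{1+p_N\rho(\theta)}$ and assume the delay satisfies $\Pr\{L=0\}=1$, so that the rate outage probability is $$F_R(N)=\begin{cases}F_N(\theta_0),& N\le \overline{R}_{\theta_0}/r_0,\\ F_N(2^{r_0N}-1),& N\ge \overline{R}_{\theta_0}/r_0.\end{cases}$$ Then every integer $N^*\ge1$ minimizing $F_R(N)$ over $N\ge 1$ satisfies $$N^*\ge \max\big\{1,\lfloor \overline{R}_{\theta_0}/r_0\rfloor\big\}.$$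
   Context: $\rho(\theta)=\theta^{2/\alpha}\int_{\theta^{-2/\alpha}}^{\infty}\frac{du}{1+u^{\alpha/2}}$ for $\theta>0$ and $\rho(0)=0$. $F_N$ is the CDF of the SIR of the typical UE when $N$ subchannels are used; $F_R(N)$ is the probability that the user rate $R=\mathbf{1}\{\mathrm{SIR}\ge\theta_0\}\log_2(1+\mathrm{SIR})/N$ is at most $r_0$. TDMA: one UE served per slot on one uniformly random subchannel out of $N$. FDMA/TDMA: UEs randomly ordered and assigned distinct uniformly random subchannels within consecutive blocks of $N$, subchannels being time-shared across blocks. *)

From Stdlib Require Import Reals Lra Arith Factorial.
Open Scope R_scope.

(* Rising factorial (a)_k = Gamma(a+k)/Gamma(a) = a (a+1) ... (a+k-1). *)
Fixpoint rising (a : R) (k : nat) : R :=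
  match k with
  | O => 1
  | S k' => rising a k' * (a + INR k')
  end.

Definition pmfK (tau : R) (k : nat) : R :=
  Rpower 3.5 3.5 * rising 3.5 k * Rpower tau 3.5
  / (INR (fact k) * Rpower (1 + 3.5 * tau) (INR k + 3.5)).

Inductive scheme := TDMA | FDMA_TDMA.

(* weight such that N * p_N = sum_k Pr{K=k} * weight N k *)
Definition weight (s : scheme) (N k : nat) : R :=
  match s with
  | TDMA => if (0 <? k)%nat then 1 else 0
  | FDMA_TDMA => INR (Nat.min k N)
  end.

Definition activity_prob (s : scheme) (tau : R) (p : nat -> R) : Prop :=
  forall N : nat, (1 <= N)%nat ->
    infinite_sum (fun k => pmfK tau k * weight s N k) (INR N * p N).

Definition improper_int_infty (f : R -> R) (a l : R) : Prop :=
  forall eps : R, eps > 0 -> exists M : R, forall b : R, b >= M ->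
    exists pr : Riemann_integrable f a b, Rabs (RiemannInt pr - l) < eps.

Definition is_rho (alpha : R) (rho : R -> R) : Prop :=
  rho 0 = 0 /\
  forall theta : R, theta > 0 ->
    exists I : R,
      improper_int_infty (fun u => / (1 + Rpower u (alpha / 2)))
                         (Rpower theta (- (2 / alpha))) I
      /\ rho theta = Rpower theta (2 / alpha) * I.

Definition sir_cdf (rho : R -> R) (p : nat -> R) (N : nat) (theta : R) : R :=
  1 - / (1 + p N * rho theta).

Definition Rbar (theta0 : R) : R := ln (1 + theta0) / ln 2.

Definition rate_outage (rho : R -> R) (p : nat -> R) (theta0 r0 : R) (N : nat) : R :=
  if Rle_dec (INR N) (Rbar theta0 / r0)
  then sir_cdf rho p N theta0
  else sir_cdf rho p N (Rpower 2 (r0 * INR N) - 1).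

From Stdlib Require Import Reals Lra Lia Psatz ZArith Arith.
Open Scope R_scope.

(* For N <= Rbar/r0 the rate outage is F_R(N) = 1 - 1/(1 + p_N rho(theta0)),
   so F_R is strictly decreasing in N on this range as soon as
   (a) p_N is strictly decreasing in N, and (b) rho(theta0) > 0.
   Fact (a) holds for both schedulers because N p_N = sum_k Pr{K=k} w(N,k)
   where the weight w(N,k)/N is nonincreasing in N and strictly decreasing at
   k = 1, and every Pr{K=k} is positive.  Fact (b) holds because rho(theta0)
   is theta0^(2/alpha) times the improper integral of a positive function. *)

Lemma Rpower_pos (x y : R) : 0 < Rpower x y.
Proof. unfold Rpower; apply exp_pos. Qed.

Lemma Rpower_le_base (x y c : R) : 0 < x -> x <= y -> 0 < c ->
  Rpower x c <= Rpower y c.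
Proof.
  intros Hx Hxy Hc. unfold Rpower.
  destruct (Req_dec x y) as [<-|]; [lra|].
  left; apply exp_increasing, Rmult_lt_compat_l; [lra|].
  apply ln_increasing; lra.
Qed.

Lemma rising_pos (a : R) (k : nat) : 0 < a -> 0 < rising a k.
Proof.
  intros Ha; induction k as [|k IH]; simpl; [lra|].
  apply Rmult_lt_0_compat; [exact IH|]. pose proof (pos_INR k); lra.
Qed.

Lemma pmfK_pos (tau : R) (k : nat) : 0 < pmfK tau k.
Proof.
  unfold pmfK, Rdiv.
  assert (Hfact : 0 < INR (fact k)) by (apply lt_0_INR, lt_O_fact).
  apply Rmult_lt_0_compat.
  - assert (0 < rising 3.5 k) by (apply rising_pos; lra).
    repeat apply Rmult_lt_0_compat; auto using Rpower_pos.
  - apply Rinv_0_lt_compat, Rmult_lt_0_compat; auto using Rpower_pos.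
Qed.

Lemma series_pos (u : nat -> R) (l : R) (j : nat) :
  infinite_sum u l -> (forall k, 0 <= u k) -> 0 < u j -> 0 < l.
Proof.
  intros Hs Hu Hj.
  assert (Hpartial : sum_f_R0 u j <= l) by (apply sum_incr; assumption).
  destruct j as [|j]; simpl in Hpartial; [lra|].
  pose proof (cond_pos_sum u j Hu); lra.
Qed.

Lemma Un_cv_const (c : R) : Un_cv (fun _ => c) c.
Proof.
  intros e He; exists 0%nat; intros n _.
  unfold Rdist; rewrite Rminus_diag, Rabs_R0; lra.
Qed.

Lemma infinite_sum_comb (u v : nat -> R) (a b c d : R) :
  infinite_sum u a -> infinite_sum v b ->
  infinite_sum (fun k => c * u k - d * v k) (c * a - d * b).
Proof.
  intros Hu Hv.
  change (Un_cv (sum_f_R0 (fun k => c * u k - d * v k)) (c * a - d * b)).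
  apply Un_cv_ext with (fun n => c * sum_f_R0 u n - d * sum_f_R0 v n).
  { intros n; rewrite minus_sum, !scal_sum.
    f_equal; apply sum_eq; intros; ring. }
  apply CV_minus; apply CV_mult; auto using Un_cv_const.
Qed.

Lemma weight_nonneg (s : scheme) (N k : nat) : 0 <= weight s N k.
Proof.
  destruct s; simpl; [destruct (0 <? k)%nat; lra | apply pos_INR].
Qed.

(* w(N,k)/N is nonincreasing in N, i.e. A w(B,k) <= B w(A,k) for A < B. *)
Lemma weight_ratio_le (s : scheme) (A B k : nat) : (A < B)%nat ->
  INR A * weight s B k <= INR B * weight s A k.
Proof.
  intros HAB; assert (INR A < INR B) by (apply lt_INR; exact HAB).
  destruct s; simpl.
  - destruct (0 <? k)%nat; lra.
  - rewrite <- !mult_INR; apply le_INR; nia.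
Qed.

(* ... and strictly decreasing at k = 1, where w(N,1) = 1 for N >= 1. *)
Lemma weight_one (s : scheme) (N : nat) : (1 <= N)%nat -> weight s N 1 = 1.
Proof.
  intros HN; destruct s; unfold weight; [reflexivity|].
  replace (Nat.min 1 N) with 1%nat by lia; reflexivity.
Qed.

Lemma activity_pos (s : scheme) (tau : R) (p : nat -> R) (N : nat) :
  activity_prob s tau p -> (1 <= N)%nat -> 0 < p N.
Proof.
  intros Hp HN.
  assert (HNp : 0 < INR N * p N).
  { apply (series_pos _ _ 1%nat (Hp N HN)).
    - intros k; apply Rmult_le_pos; [left; apply pmfK_pos | apply weight_nonneg].
    - rewrite weight_one by exact HN; rewrite Rmult_1_r; apply pmfK_pos. }
  assert (0 < INR N) by (apply lt_0_INR; lia). nra.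
Qed.

(* The series of B Pr{K=k} w(A,k) - A Pr{K=k} w(B,k) has
   nonnegative terms, a positive term at k = 1, and sum A B (p_A - p_B). *)
Lemma activity_decr (s : scheme) (tau : R) (p : nat -> R) (A B : nat) :
  activity_prob s tau p -> (1 <= A)%nat -> (A < B)%nat -> p B < p A.
Proof.
  intros Hp HA HAB.
  set (term := fun N k => pmfK tau k * weight s N k).
  assert (Hsum : infinite_sum (fun k => INR B * term A k - INR A * term B k)
                   (INR B * (INR A * p A) - INR A * (INR B * p B))).
  { apply infinite_sum_comb; apply Hp; lia. }
  assert (Hterm : forall k, INR B * term A k - INR A * term B k
          = pmfK tau k * (INR B * weight s A k - INR A * weight s B k)).
  { intros k; unfold term; ring. }
  assert (INR A < INR B) by (apply lt_INR; exact HAB).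
  assert (Hpos : 0 < INR B * (INR A * p A) - INR A * (INR B * p B)).
  { apply (series_pos _ _ 1%nat Hsum).
    - intros k; rewrite Hterm; apply Rmult_le_pos; [left; apply pmfK_pos|].
      pose proof (weight_ratio_le s A B k HAB); lra.
    - rewrite Hterm, !weight_one by lia.
      apply Rmult_lt_0_compat; [apply pmfK_pos | lra]. }
  assert (0 < INR A) by (apply lt_0_INR; lia).
  assert (Hprod : 0 < INR A * INR B) by (apply Rmult_lt_0_compat; lra).
  apply Rmult_lt_reg_l with (INR A * INR B); [exact Hprod | lra].
Qed.

Lemma RiemannInt_ge_const (f : R -> R) (a b k : R) (pr : Riemann_integrable f a b) :
  a <= b -> (forall x, a < x < b -> k <= f x) -> k * (b - a) <= RiemannInt pr.
Proof.
  intros Hab Hk.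
  rewrite <- (RiemannInt_P15 (RiemannInt_P14 a b k)).
  apply RiemannInt_P19; [exact Hab|]. intros x Hx; apply Hk, Hx.
Qed.

Lemma improper_int_pos (f : R -> R) (a I k : R) :
  0 < k -> (forall x, a < x < a + 1 -> k <= f x) ->
  (forall x, a + 1 < x -> 0 <= f x) ->
  improper_int_infty f a I -> 0 < I.
Proof.
  intros Hk Hnear Hfar HI.
  destruct (HI (k / 2) ltac:(lra)) as [M HM].
  set (b := Rmax M (a + 1)).
  assert (Hb : a + 1 <= b) by apply Rmax_r.
  destruct (HM b ltac:(pose proof (Rmax_l M (a + 1)); unfold b; lra)) as [pr Hpr].
  assert (pr1 : Riemann_integrable f a (a + 1)) by (apply (RiemannInt_P22 pr); lra).
  assert (pr2 : Riemann_integrable f (a + 1) b) by (apply (RiemannInt_P23 pr); lra).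
  rewrite <- (RiemannInt_P26 pr1 pr2 pr) in Hpr.
  assert (H1 := RiemannInt_ge_const f a (a + 1) k pr1 ltac:(lra) Hnear).
  assert (H2 := RiemannInt_ge_const f (a + 1) b 0 pr2 Hb
                  (fun x Hx => Hfar x (proj1 Hx))).
  apply Rabs_def2 in Hpr; lra.
Qed.

(* rho(theta) > 0 for theta > 0: the integrand 1/(1 + u^(alpha/2)) is
   positive and decreasing, hence bounded below near the lower limit. *)
Lemma rho_pos (alpha : R) (rho : R -> R) (theta : R) :
  alpha > 0 -> is_rho alpha rho -> theta > 0 -> 0 < rho theta.
Proof.
  intros Halpha [_ Hrho] Htheta.
  destruct (Hrho theta Htheta) as [I [HI ->]].
  set (a := Rpower theta (- (2 / alpha))) in HI.
  assert (Hc : 0 < alpha / 2) by lra.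
  assert (Ha : 0 < a) by apply Rpower_pos.
  apply Rmult_lt_0_compat; [apply Rpower_pos|].
  apply (improper_int_pos (fun u => / (1 + Rpower u (alpha / 2))) a I
           (/ (1 + Rpower (a + 1) (alpha / 2)))); [| | |exact HI].
  - apply Rinv_0_lt_compat; pose proof (Rpower_pos (a + 1) (alpha / 2)); lra.
  - intros x Hx; apply Rinv_le_contravar.
    + pose proof (Rpower_pos x (alpha / 2)); lra.
    + pose proof (Rpower_le_base x (a + 1) (alpha / 2) ltac:(lra) ltac:(lra) Hc); lra.
  - intros x _; left; apply Rinv_0_lt_compat.
    pose proof (Rpower_pos x (alpha / 2)); lra.
Qed.

Lemma sir_cdf_decr (s : scheme) (tau : R) (rho : R -> R) (p : nat -> R)
  (theta : R) (A B : nat) :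
  activity_prob s tau p -> 0 < rho theta -> (1 <= A)%nat -> (A < B)%nat ->
  sir_cdf rho p B theta < sir_cdf rho p A theta.
Proof.
  intros Hp Hrho HA HAB; unfold sir_cdf.
  assert (HpB : 0 < p B) by (apply (activity_pos s tau); [exact Hp | lia]).
  assert (Hlt : p B * rho theta < p A * rho theta)
    by (apply Rmult_lt_compat_r; [exact Hrho | apply (activity_decr s tau); assumption]).
  assert (0 < p B * rho theta) by (apply Rmult_lt_0_compat; assumption).
  assert (/ (1 + p A * rho theta) < / (1 + p B * rho theta))
    by (apply Rinv_lt_contravar; [apply Rmult_lt_0_compat|]; lra).
  lra.
Qed.

Lemma rate_outage_low (rho : R -> R) (p : nat -> R) (theta0 r0 : R) (N : nat) :
  INR N <= Rbar theta0 / r0 ->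
  rate_outage rho p theta0 r0 N = sir_cdf rho p N theta0.
Proof.
  intros HN; unfold rate_outage.
  destruct (Rle_dec (INR N) (Rbar theta0 / r0)); [reflexivity | contradiction].
Qed.

(* Rbar(0) = 0, so a positive ratio Rbar(theta0)/r0 forces theta0 > 0. *)
Lemma theta0_pos_of_Rbar (theta0 r0 : R) :
  theta0 >= 0 -> 0 < Rbar theta0 / r0 -> theta0 > 0.
Proof.
  intros Htheta0 HR.
  destruct (Req_dec theta0 0) as [E|]; [|lra].
  unfold Rbar in HR; rewrite E, Rplus_0_r, ln_1 in HR.
  unfold Rdiv in HR; rewrite !Rmult_0_l in HR; lra.
Qed.

Lemma nat_below_floor (x : R) (N : nat) :
  INR N < IZR (Int_part x) -> exists M : nat, (N < M)%nat /\ INR M <= x.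
Proof.
  intros HN.
  destruct (base_Int_part x) as [Hfloor _].
  rewrite INR_IZR_INZ in HN; apply lt_IZR in HN.
  exists (Z.to_nat (Int_part x)); split; [lia|].
  rewrite INR_IZR_INZ, Z2Nat.id by lia; exact Hfloor.
Qed.

Theorem proposition2 (alpha theta0 r0 tau : R) (s : scheme)
  (rho : R -> R) (p : nat -> R)
  (Halpha : alpha > 2) (Htheta0 : theta0 >= 0) (Hr0 : r0 > 0) (Htau : tau > 0)
  (Hrho : is_rho alpha rho) (Hp : activity_prob s tau p)
  (Nstar : nat) (HNstar : (1 <= Nstar)%nat)
  (Hmin : forall N : nat, (1 <= N)%nat ->
            rate_outage rho p theta0 r0 Nstar <= rate_outage rho p theta0 r0 N) :
  Rmax 1 (IZR (Int_part (Rbar theta0 / r0))) <= INR Nstar.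
Proof.
  assert (HN1 : 1 <= INR Nstar) by (apply (le_INR 1 Nstar) in HNstar; exact HNstar).
  apply Rmax_lub; [exact HN1|].
  destruct (Rlt_or_le (INR Nstar) (IZR (Int_part (Rbar theta0 / r0)))) as [Hlt|]; [|assumption].
  exfalso.
  destruct (nat_below_floor _ _ Hlt) as [M [HNM HM]].
  assert (HNM' : INR Nstar < INR M) by (apply lt_INR; exact HNM).
  assert (Hpos : theta0 > 0) by (apply (theta0_pos_of_Rbar theta0 r0); lra).
  assert (Hrho0 : 0 < rho theta0) by (apply (rho_pos alpha); [lra | assumption | exact Hpos]).
  specialize (Hmin M ltac:(lia)).
  rewrite !rate_outage_low in Hmin by lra.
  pose proof (sir_cdf_decr s tau rho p theta0 Nstar M Hp Hrho0 HNstar HNM).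
  lra.
Qed.
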